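(* If $G$ is a group with $|G|=27$, then $cr(G)=10$.
   Context: $G$ is written additively (not necessarily commutative). For a subset $S=\{a_1,\dots,a_k\}$ of $G$, $\sum(S)$ denotes the set of all elements $a_{i_1}+\cdots+a_{i_l}$ with $1\le l\le k$ and $i_1,\dots,i_l$ pairwise distinct indices (in any order). The critical number $cr(G)$ is the smallest integer $t$ such that every subset $S\subseteq G\setminus\{0\}$ with $|S|\ge t$ satisfies $\sum(S)=G$. *)

From mathcomp Require Import all_boot all_fingroup.
Set Implicit Arguments. Unset Strict Implicit. Unset Printing Implicit Defensive.

(* The paper writes G additively; we use mathcomp's (multiplicative) finGroupType,
   with the group operation mulg and identity 1 playing the role of + and 0. *)

Definition in_sigma (gT : finGroupType) (S : {set gT}) (g : gT) : Prop :=
  exists s : seq gT,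
    [/\ s != [::], uniq s, {subset s <= S} & (\prod_(x <- s) x)%g = g].

Definition cr_threshold (gT : finGroupType) (t : nat) : Prop :=
  forall S : {set gT}, (1%g \notin S) -> t <= #|S| -> forall g : gT, in_sigma S g.

Definition is_cr (gT : finGroupType) (t : nat) : Prop :=
  cr_threshold gT t /\ forall t', cr_threshold gT t' -> t <= t'.

From mathcomp Require Import all_boot all_fingroup all_solvable.
From mathcomp Require Import zify.
Set Implicit Arguments. Unset Strict Implicit. Unset Printing Implicit Defensive.

(* Lower bound: a group of order 27 has a normal subgroup N of index 3, and for
   x outside N every subset product of x |: (N :\ 1) lies in N :|: x *: N, so
   this set of 9 elements misses a coset.
   Upper bound: a group of order 27 is generated by x, y and a central z of
   order 3 with y^3 = z^r, [y, x] = z^w and x^3 = y^u z^v, and its elements are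
   the x^a y^b z^c.  This yields 30 explicit multiplication tables on indices
   0..26; explicit isomorphisms reduce them to the five groups of order 27,
   for which an exhaustive search shows that every 10 nonidentity elements
   have all 27 elements among their subset products. *)

Section Threshold.
Variable gT : finGroupType.
Local Open Scope group_scope.
Implicit Types (N : {group gT}) (x g : gT).

Lemma cr_thresholdW t t' : cr_threshold gT t -> t <= t' -> cr_threshold gT t'.
Proof. by move=> crt le_tt' S S1 leS; apply: crt => //; apply: leq_trans leS. Qed.

Lemma prod_uniq_mem_lcoset N x (s : seq gT) :
  x \in 'N(N) -> uniq s -> {subset s <= x |: N} ->
  \prod_(y <- s) y \in x ^+ (x \in s) *: N.
Proof.
move=> nNx; elim: s => [|a s IHs] /=; first by rewrite big_nil expg0 lcoset1 group1.
move=> /andP[s'a us] sSN; rewrite big_cons.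
have := IHs us (fun b sb => sSN b (mem_behead (s := a :: s) sb)).
have [xa|xa] := eqVneq a x.
  subst a; rewrite (negPf s'a) mem_head expg0 lcoset1 expg1 => Ns.
  by rewrite mem_lcoset mulKg.
have Na : a \in N by have := sSN a (mem_head a s); rewrite !inE (negPf xa).
rewrite inE eq_sym (negPf xa) /=; move: (x ^+ _) (groupX (x \in s) nNx) => k nNk.
rewrite !mem_lcoset => ksN.
have -> : k^-1 * (a * \prod_(y <- s) y) = a ^ k * (k^-1 * \prod_(y <- s) y).
  by rewrite conjgE !mulgA mulgK.
by rewrite groupM ?memJ_norm.
Qed.

Lemma not_cr_threshold_lcosets N x g :
  x \in 'N(N) -> x \notin N -> g \notin N :|: x *: N -> ~ cr_threshold gT #|N|.
Proof.
move=> nNx N'x gN'xN crN.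
pose S := x |: (N :\ 1).
have S'1 : 1 \notin S.
  by rewrite !inE eqxx /= orbF; apply: contra N'x => /eqP <-; apply: group1.
have leNS : #|N| <= #|S|.
  by rewrite cardsU1 (cardsD1 1 N) group1 !inE (negPf N'x) andbF.
have [s [_ us sS sg]] := crN S S'1 leNS g.
have sxN : {subset s <= x |: N}.
  by move=> y /sS; rewrite !inE => /orP[->|/andP[_ ->]]; rewrite ?orbT.
move: gN'xN (prod_uniq_mem_lcoset nNx us sxN); rewrite sg inE.
by case: (x \in s); rewrite ?expg0 ?expg1 ?lcoset1 => /norP[/negP N'g /negP xN'g].
Qed.

End Threshold.

Lemma pgroup_not_cr_threshold (gT : finGroupType) p n :
  prime p -> 2 < p -> #|gT| = p ^ n.+1 -> ~ cr_threshold gT (p ^ n).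
Proof.
move=> p_pr p_gt2 cardG.
have pG : pgroup p [set: gT] by rewrite /pgroup cardsT cardG pnatX pnat_id.
have [N [_ /andP[_ nNG] cardN]] : exists N : {group gT},
    [/\ N \subset setT, (N <| setT)%g & #|N| = p ^ n].
  by apply: normal_pgroup pG (normal_refl _) _; rewrite cardsT cardG pfactorK.
have ltNG : #|N| < #|gT| by rewrite cardN cardG ltn_exp2l ?prime_gt1.
have [x _ N'x] : exists2 x, x \in [set: gT] & x \notin N.
  by apply/subsetPn; apply: contraTN ltNG => /subset_leq_card; rewrite cardsT leqNgt.
have [g _ gN'xN] : exists2 g, g \in [set: gT] & g \notin N :|: (x *: N)%g.
  apply/subsetPn/negP => /subset_leq_card; rewrite cardsT cardG.
  have := (leq_card_setU N (x *: N)%g).1; rewrite card_lcoset cardN => le2.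
  move=> /leq_trans/(_ le2); rewrite expnS.
  have : 0 < p ^ n by rewrite expn_gt0 prime_gt0.
  move: (p ^ n) => q; nia.
rewrite -cardN; exact: not_cr_threshold_lcosets (subsetP nNG x (in_setT x)) N'x gN'xN.
Qed.

Section SigmaClosure.
Variable gT : finGroupType.
Implicit Types (S : {set gT}) (x g : gT).
Local Open Scope group_scope.

Lemma in_sigma1 S x : x \in S -> in_sigma S x.
Proof.
move=> Sx; exists [:: x]; split=> //; last by rewrite big_seq1.
by move=> y; rewrite inE => /eqP->.
Qed.

Lemma in_sigmaS S S' g : S \subset S' -> in_sigma S g -> in_sigma S' g.
Proof.
by move=> /subsetP sSS' [s [s0 us sS sg]]; exists s; split=> // y /sS /sSS'.
Qed.

Lemma in_sigma_mulr S x g : x \notin S -> in_sigma S g -> in_sigma (x |: S) (g * x).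
Proof.
move=> S'x [s [s0 us sS <-]]; exists (rcons s x); split.
- by case: (s) s0.
- by rewrite rcons_uniq us andbT; apply: contra S'x => /sS.
- by move=> y; rewrite mem_rcons !inE => /orP[->|/sS->]; rewrite ?orbT.
- by rewrite -cats1 big_cat big_seq1.
Qed.

Lemma in_sigma_mull S x g : x \notin S -> in_sigma S g -> in_sigma (x |: S) (x * g).
Proof.
move=> S'x [s [s0 us sS <-]]; exists (x :: s); split=> //.
- by rewrite /= us andbT; apply: contra S'x => /sS.
- by move=> y; rewrite !inE => /orP[->|/sS->]; rewrite ?orbT.
- by rewrite big_cons.
Qed.

End SigmaClosure.

Section SubsetProductSearch.
Variable n : nat.

Definition mark (Q : seq bool) k := set_nth false Q k true.

Fixpoint mark_products (Q : seq bool) (col row : seq nat) (acc : seq bool) :=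
  match Q, col, row with
  | q :: Q', a :: col', b :: row' =>
      mark_products Q' col' row' (if q then mark (mark acc a) b else acc)
  | _, _, _ => acc
  end.

Definition candidate := (nat * seq nat * seq nat)%type.

Definition table_candidate (T : nat -> nat -> nat) s : candidate :=
  (s, [seq T j s | j <- iota 0 n], [seq T s j | j <- iota 0 n]).

(* Extending by the candidate s marks s and the products q s, s q of the marked
   q, read off the column and row of s.  This under-approximates the new subset
   products, which is all the search needs. *)
Definition extend (e : candidate) Q :=
  let: (s, col, row) := e in mark_products Q col row (mark Q s).

Definition full (Q : seq bool) := (n <= size Q) && all id (take n Q).

(* covers k Q c: every choice of k candidates from c (kept in order) extends Q
   to a full table; the search is cut as soon as Q is full. *)
Fixpoint covers k Q (c : seq candidate) : bool :=
  if full Q then true else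
  if size c < k then true else
  match k, c with
  | 0, _ => false
  | _, [::] => true
  | k'.+1, e :: c' => covers k' (extend e Q) c' && covers k Q c'
  end.

Lemma nth_mark Q k i : nth false (mark Q k) i = (i == k) || nth false Q i.
Proof. by rewrite /mark nth_set_nth /=; case: eqP. Qed.

Lemma mark_products_mono Q col row acc i :
  nth false acc i -> nth false (mark_products Q col row acc) i.
Proof.
elim: Q col row acc => [|q Q IHQ] [|a col] [|b row] acc //= acc_i.
by apply: IHQ; case: q => //; rewrite !nth_mark acc_i !orbT.
Qed.

Lemma mark_productsP Q col row acc i : nth false (mark_products Q col row acc) i ->
  nth false acc i \/
  exists2 j, nth false Q j /\ j < size col & i = nth 0 col j \/ i = nth 0 row j.
Proof.
elim: Q col row acc => [|q Q IHQ] [|a col] [|b row] acc //=; try by left.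
case/IHQ=> [|[j [Qj lt_j] ij]]; last by right; exists j.+1.
case: q => acc_i; last by left.
move: acc_i; rewrite !nth_mark => /orP[/eqP->|/orP[/eqP->|]]; last by left.
- by right; exists 0 => //; right.
- by right; exists 0 => //; left.
Qed.

Lemma extend_mono e Q i : nth false Q i -> nth false (extend e Q) i.
Proof.
by case: e => [[s col] row] Q_i; apply: mark_products_mono; rewrite nth_mark Q_i orbT.
Qed.

Lemma fullE Q : full Q = all (nth false Q) (iota 0 n).
Proof.
apply/idP/allP => [/andP[le_nQ /(all_nthP false) allQ] i|allQ].
  rewrite mem_iota => /andP[_ lt_in].
  by have := allQ i; rewrite size_takel // nth_take //; apply.
have le_nQ : n <= size Q.
  case: n allQ => // n' allQ; rewrite leqNgt; apply/negP => ltQ.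
  by have := allQ n'; rewrite mem_iota add0n ltnSn nth_default // => /(_ isT).
rewrite /full le_nQ; apply/(all_nthP false) => i; rewrite size_takel // => lt_in.
by rewrite nth_take //; apply: allQ; rewrite mem_iota.
Qed.

Lemma fullP Q i : full Q -> i < n -> nth false Q i.
Proof. by rewrite fullE => /allP allQ lt_in; apply: allQ; rewrite mem_iota. Qed.

Lemma full_foldl_extend L Q : full Q -> full (foldl (fun Q e => extend e Q) Q L).
Proof.
elim: L Q => //= e L IHL Q fullQ; apply: IHL; move: fullQ; rewrite !fullE.
by apply: sub_all => i; apply: extend_mono.
Qed.

Lemma covers_full k Q c L : covers k Q c -> subseq L c -> size L = k ->
  full (foldl (fun Q e => extend e Q) Q L).
Proof.
elim: c k Q L => [|e c IHc] k Q L cov sLc szL.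
  by move: sLc cov; rewrite subseq0 => /eqP L0; rewrite -szL L0 /=; case: ifP.
move: cov => /=; case: ifP => [fullQ _|_]; first exact: full_foldl_extend.
case: ltnP => [lt_ck|_]; first by have := size_subseq sLc; rewrite szL leqNgt lt_ck.
case: k szL => // k szL /andP[cov_e cov_c].
case: L sLc szL => [|e' L] //= sLc szL.
case: eqP sLc => [-> sLc|_ sLc]; first by apply: IHc cov_e sLc _; case: szL.
exact: IHc cov_c sLc szL.
Qed.

End SubsetProductSearch.

Definition table_rep (gT : finGroupType) n (T : nat -> nat -> nat) (F : nat -> gT) :=
  [/\ forall i j, i < n -> j < n -> T i j < n /\ F (T i j) = (F i * F j)%g,
      forall g, exists2 i, i < n & F i = g,
      {in [pred i | i < n] &, injective F} & F 0 = 1%g].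

Section TableSearch.
Variables (gT : finGroupType) (n : nat) (T : nat -> nat -> nat) (F : nat -> gT).
Hypothesis repT : table_rep n T F.

Definition marks_in_sigma (A : {set gT}) Q :=
  forall i, nth false Q i -> i < n /\ in_sigma A (F i).

Lemma marks_in_sigma_extend A Q s : marks_in_sigma A Q -> s < n -> F s \notin A ->
  marks_in_sigma (F s |: A) (extend (table_candidate n T s) Q).
Proof.
have [TM _ _ _] := repT.
move=> AQ lt_sn A'Fs i /mark_productsP[|[j [Qj]]].
  rewrite nth_mark => /orP[/eqP->|/AQ[lt_in sigma_i]].
    by split=> //; apply/in_sigma1/setU11.
  by split=> //; apply: in_sigmaS sigma_i; apply: subsetUr.
rewrite size_map size_iota => lt_jn.
have [_ sigma_j] := AQ j Qj.
rewrite !(nth_map 0) ?size_iota // !nth_iota // !add0n.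
have [lt_js Fjs] := TM j s lt_jn lt_sn; have [lt_sj Fsj] := TM s j lt_sn lt_jn.
by case=> ->; [rewrite Fjs; split=> //; apply: in_sigma_mulr
              | rewrite Fsj; split=> //; apply: in_sigma_mull].
Qed.

Lemma marks_in_sigma_search L : all (fun i => i < n) L -> uniq (map F L) ->
  marks_in_sigma [set g in map F L]
    (foldl (fun Q e => extend e Q) [::] (map (table_candidate n T) L)).
Proof.
elim/last_ind: L => [_ _ i|L s IHL]; first by rewrite nth_nil.
rewrite all_rcons !map_rcons rcons_uniq foldl_rcons => /andP[lt_sn ltL] /andP[L'Fs uL].
have {IHL} := IHL ltL uL.
have -> : [set g in rcons (map F L) (F s)] = F s |: [set g in map F L].
  by apply/setP => g; rewrite !inE mem_rcons inE.
by move=> AL; apply: marks_in_sigma_extend; rewrite ?inE.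
Qed.

Lemma table_cr_threshold k :
  covers n k [::] (map (table_candidate n T) (iota 1 n.-1)) -> cr_threshold gT k.
Proof.
have [TM Fsurj Finj F0] := repT.
move=> cov S S'1 leS g.
pose idx := [seq i <- iota 1 n.-1 | F i \in S].
have idxP i : i \in idx -> i < n /\ F i \in S.
  by rewrite mem_filter mem_iota => /andP[-> /andP[i_gt0 lt_in]]; split=> //; lia.
have le_k_idx : k <= size idx.
  apply: (leq_trans leS); rewrite -(size_map F).
  apply: leq_trans (card_size _); apply/subset_leq_card/subsetP => h Sh.
  have [i lt_in Fi] := Fsurj h.
  have i_gt0 : 0 < i by rewrite lt0n; apply: contraNneq S'1 => i0; rewrite -F0 -i0 Fi.
  by rewrite -Fi map_f // mem_filter Fi Sh mem_iota i_gt0 /=; lia.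
pose L := take k idx.
have sL : subseq L (iota 1 n.-1) := subseq_trans (take_subseq idx k) (filter_subseq _ _).
have LP i : i \in L -> i < n /\ F i \in S by move=> /mem_take /idxP.
have fullL := covers_full cov (map_subseq (table_candidate n T) sL).
have {}fullL := fullL (etrans (size_map _ _) (size_takel le_k_idx)).
have uFL : uniq (map F L).
  rewrite map_inj_in_uniq ?(subseq_uniq sL (iota_uniq _ _)) // => i j /LP[lt_in _] /LP[lt_jn _].
  exact: Finj.
have ltL : all (fun i => i < n) L by apply/allP => i /LP[].
have [i lt_in <-] := Fsurj g.
have [_] := marks_in_sigma_search ltL uFL (fullP fullL lt_in).
by apply: in_sigmaS; apply/subsetP => h; rewrite inE => /mapP[j /LP[_ Sj] ->].
Qed.

End TableSearch.

(* The index 9 a + 3 b + c (a, b, c < 3) stands for x^a y^b z^c, where z is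
   central, z^3 = 1, y^3 = z^r, y x = x y z^w and x^3 = y^u z^v; pres_mul
   computes the index of the normal form of a product. *)
Definition pres_mul (r u v w : nat) (i j : nat) : nat :=
  let a := i %/ 9 in let b := (i %/ 3) %% 3 in let c := i %% 3 in
  let a' := j %/ 9 in let b' := (j %/ 3) %% 3 in let c' := j %% 3 in
  let A := a + a' in
  let B := b + b' + u * (A %/ 3) in
  let C := c + c' + w * b * a' + v * (A %/ 3) + r * (B %/ 3) in
  9 * (A %% 3) + 3 * (B %% 3) + C %% 3.

Lemma pres_mul_lt r u v w i j : pres_mul r u v w i j < 27.
Proof. rewrite /pres_mul; lia. Qed.

Section Presentation.
Variable gT : finGroupType.
Local Open Scope group_scope.
Variables (x y z : gT) (r u v w : nat).
Hypotheses (zC : forall g, commute z g) (z3 : z ^+ 3 = 1) (y3 : y ^+ 3 = z ^+ r).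
Hypotheses (yx : y * x = x * y * z ^+ w) (x3 : x ^+ 3 = y ^+ u * z ^+ v).

Definition pres_elt (i : nat) : gT := x ^+ (i %/ 9) * y ^+ ((i %/ 3) %% 3) * z ^+ (i %% 3).

Lemma commute_zX n g : commute (z ^+ n) g.
Proof. exact/commute_sym/commuteX/commute_sym. Qed.

Lemma expy_mod3 n : y ^+ n = y ^+ (n %% 3) * z ^+ (r * (n %/ 3)).
Proof. by rewrite {1}(divn_eq n 3) expgD mulnC expgM y3 -expgM; apply: commute_zX. Qed.

Lemma expx_mod3 n : x ^+ n = x ^+ (n %% 3) * y ^+ (u * (n %/ 3)) * z ^+ (v * (n %/ 3)).
Proof.
rewrite {1}(divn_eq n 3) addnC expgD mulnC expgM x3 expgMn; last exact/commute_sym/commute_zX.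
by rewrite -!expgM mulgA.
Qed.

Lemma expy_mulx b : y ^+ b * x = x * y ^+ b * z ^+ (w * b).
Proof.
elim: b => [|b IHb]; first by rewrite !expg0 muln0 expg0 !mulg1 mul1g.
rewrite expgS -mulgA IHb !mulgA yx -(mulgA _ (z ^+ w)) (commute_zX w (y ^+ b)).
by rewrite !mulgA -(mulgA _ (z ^+ w)) -expgD mulnS.
Qed.

Lemma expy_mul_expx b a : y ^+ b * x ^+ a = x ^+ a * y ^+ b * z ^+ (w * b * a).
Proof.
elim: a => [|a IHa]; first by rewrite !expg0 muln0 expg0 !mulg1 mul1g.
rewrite expgSr mulgA IHa -mulgA (commute_zX _ x) !mulgA -(mulgA _ (y ^+ b)) expy_mulx.
by rewrite !mulgA -expgSr -mulgA -expgD mulnS addnC.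
Qed.

Lemma pres_eltM i j : pres_elt i * pres_elt j = pres_elt (pres_mul r u v w i j).
Proof.
rewrite /pres_elt /pres_mul.
set a := i %/ 9; set b := (i %/ 3) %% 3; set c := i %% 3.
set a' := j %/ 9; set b' := (j %/ 3) %% 3; set c' := j %% 3.
set A := a + a'; set B := b + b' + u * (A %/ 3).
set C := c + c' + w * b * a' + v * (A %/ 3) + r * (B %/ 3).
have -> : (9 * (A %% 3) + 3 * (B %% 3) + C %% 3) %/ 9 = A %% 3 by lia.
have -> : ((9 * (A %% 3) + 3 * (B %% 3) + C %% 3) %/ 3) %% 3 = B %% 3 by lia.
have -> : (9 * (A %% 3) + 3 * (B %% 3) + C %% 3) %% 3 = C %% 3 by lia.
rewrite (expg_mod C z3).
rewrite -!mulgA (commute_zX c) !mulgA -(mulgA _ (y ^+ b)) expy_mul_expx.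
rewrite !mulgA -(mulgA _ (z ^+ (w * b * a'))) (commute_zX _ (y ^+ b')).
rewrite !mulgA -expgD -/A -(mulgA _ (y ^+ b)) -expgD (expx_mod3 A).
rewrite -(mulgA _ (z ^+ (v * (A %/ 3)))) (commute_zX _ (y ^+ (b + b'))) !mulgA.
rewrite -(mulgA _ (y ^+ (u * (A %/ 3)))) -expgD (expy_mod3 (u * (A %/ 3) + (b + b'))).
have -> : u * (A %/ 3) + (b + b') = B by rewrite /B; lia.
rewrite -!mulgA; congr (_ * (_ * _)).
by rewrite -!expgD; congr (_ ^+ _); rewrite /C; lia.
Qed.

End Presentation.

Lemma pres_mul_div9 r u v w i j : pres_mul r u v w i j %/ 9 = (i %/ 9 + j %/ 9) %% 3.
Proof. rewrite /pres_mul; lia. Qed.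

Lemma dvdn_27 d : d %| 27 -> d \in [:: 1; 3; 9; 27].
Proof. by rewrite dvdn_divisors. Qed.

Lemma pres_elt_small (gT : finGroupType) (x x' y z : gT) i :
  i < 9 -> pres_elt x y z i = pres_elt x' y z i.
Proof. by move=> lt_i9; rewrite /pres_elt divn_small // !expg0. Qed.

Section PresentationOrder27.
Variable gT : finGroupType.
Local Open Scope group_scope.
Variables (x y z : gT) (r u v w : nat).
Hypotheses (zC : forall g, commute z g) (z3 : z ^+ 3 = 1) (y3 : y ^+ 3 = z ^+ r).
Hypotheses (yx : y * x = x * y * z ^+ w) (x3 : x ^+ 3 = y ^+ u * z ^+ v).
Hypotheses (oz : #[z] = 3) (cardG : #|gT| = 27) (Z'y : y \notin <[z]>).
Hypothesis K'x : x \notin [set pres_elt x y z i | i : 'I_9].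

Let F := pres_elt x y z.

Lemma pres_elt0 : F 0 = 1.
Proof. by rewrite /F /pres_elt !expg0 !mulg1. Qed.

Lemma group_set_pres_elt m :
  0 < m -> (forall i j, i < m -> j < m -> pres_mul r u v w i j < m) ->
  group_set [set F i | i : 'I_m].
Proof.
move=> m_gt0 closed; apply/group_setP; split.
  by apply/imsetP; exists (Ordinal m_gt0); rewrite // pres_elt0.
move=> g h /imsetP[i _ ->] /imsetP[j _ ->].
by rewrite (pres_eltM zC z3 y3 yx x3); apply/imsetP; exists (Ordinal (closed i j (ltn_ord i) (ltn_ord j))).
Qed.

Lemma pres_elt_bij : (forall g, exists2 i, i < 27 & F i = g) /\
  {in [pred i | i < 27] &, injective F}.
Proof.
pose G := Group (group_set_pres_elt (isT : 0 < 27) (fun i j _ _ => pres_mul_lt r u v w i j)).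
have K_closed i j : i < 9 -> j < 9 -> pres_mul r u v w i j < 9.
  by have := pres_mul_div9 r u v w i j; lia.
pose K := Group (group_set_pres_elt (isT : 0 < 9) K_closed).
have FK i (lt_i9 : i < 9) : F i \in K by apply/imsetP; exists (Ordinal lt_i9).
have FG i (lt_i27 : i < 27) : F i \in G by apply/imsetP; exists (Ordinal lt_i27).
have Fz : F 1 = z by rewrite /F /pres_elt !expg0 !mul1g expg1.
have Fy : F 3 = y by rewrite /F /pres_elt !expg0 mul1g mulg1 expg1.
have Fx : F 9 = x by rewrite /F /pres_elt !expg0 !mulg1 expg1.
have ZK : <[z]> \proper K.
  by apply/properP; split; [rewrite cycle_subG -Fz FK | exists y; rewrite // -Fy FK].
have KG : K \proper G.
  apply/properP; split; last by exists x; rewrite // -Fx FG.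
  by apply/subsetP => _ /imsetP[i _ ->]; apply: FG; apply: ltn_trans (ltn_ord i) _.
have orderG (H : {group gT}) : #|H| \in [:: 1%N; 3; 9; 27].
  by apply: dvdn_27; rewrite -cardG -cardsT cardSg ?subsetT.
have cardK : 9 <= #|K|.
  by have := orderG K; have := proper_card ZK; rewrite [#|_|]oz !inE; lia.
have cardG27 : #|G| = 27.
  by have := orderG G; have := leq_ltn_trans cardK (proper_card KG); rewrite !inE; lia.
have GT : (G : {set gT}) = setT by apply/eqP; rewrite eqEcard subsetT cardsT cardG cardG27.
split=> [g|].
  have /imsetP[i _ ->] : g \in G by rewrite GT inE.
  by exists i.
have /imset_injP injF : #|[set F i | i : 'I_27]| == #|'I_27| by rewrite card_ord cardG27.
by move=> i j lt_i lt_j /(injF (Ordinal lt_i) (Ordinal lt_j) isT isT) [].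
Qed.

Lemma pres_table_rep : table_rep 27 (pres_mul r u v w) F.
Proof.
have [Fsurj Finj] := pres_elt_bij; split=> //; last exact: pres_elt0.
by move=> i j _ _; rewrite (pres_eltM zC z3 y3 yx x3) pres_mul_lt.
Qed.

End PresentationOrder27.

Definition pres_param := (nat * nat * nat * nat)%type.

Definition pres_table (prm : pres_param) : nat -> nat -> nat :=
  let: (r, u, v, w) := prm in pres_mul r u v w.

Lemma pres_table_lt prm i j : pres_table prm i j < 27.
Proof. by case: prm => [[[r u] v] w]; apply: pres_mul_lt. Qed.

(* u = 1 when y can be chosen as x^3, u = 0 when all cubes lie in <[z]>. *)
Definition presentations : seq pres_param :=
  [seq (r, 1, 0, 0) | r <- iota 0 3] ++
  [seq (r, 0, vw.1, vw.2) | r <- iota 0 3, vw <- [seq (v, w) | v <- iota 0 3, w <- iota 0 3]].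

Section Order27.
Variable gT : finGroupType.
Local Open Scope group_scope.

Lemma order_p3_central_element p :
  prime p -> #|gT| = (p ^ 3)%N ->
  exists z : gT, [/\ #[z] = p, forall g, commute z g,
    forall g h, [~ g, h] \in <[z]> & forall g, g ^+ (p ^ 2)%N \in <[z]>].
Proof.
move=> p_pr cardG.
have pG : pgroup p [set: gT] by rewrite /pgroup cardsT cardG pnatX pnat_id.
have ntZ : 'Z([set: gT]) != 1.
  apply: contraTneq isT => /(trivg_center_pgroup pG)/(congr1 (fun A : {set gT} => #|A|)).
  by rewrite cardsT cards1 cardG => /eqP; rewrite -(expn0 p) eqn_exp2l ?prime_gt1.
have [_ p_dvd_Z _] := pgroup_pdiv (pgroupS (center_sub _) pG) ntZ.
have [z Zz oz] := Cauchy p_pr p_dvd_Z.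
have zC g : commute z g by move/centerP: Zz => [_]; apply; apply: in_setT.
have nZG : [set: gT] \subset 'N(<[z]>).
  by apply/normal_norm/sub_center_normal; rewrite cycle_subG.
have cardGZ : #|[set: gT] / <[z]>| = (p ^ 2)%N.
  rewrite card_quotient // -divgS ?subsetT // cardsT cardG [#|_|]oz.
  by rewrite expnS mulKn ?prime_gt0.
have abGZ : abelian ([set: gT] / <[z]>) := card_p2group_abelian p_pr cardGZ.
exists z; split=> // [g h|g].
  apply/(subsetP (der1_min nZG abGZ))/mem_commg; exact: in_setT.
have nZg : g \in 'N(<[z]>) by apply/(subsetP nZG)/in_setT.
apply: coset_idr; first by rewrite groupX.
rewrite morphX //= -cardGZ; apply/expg_cardG/mem_quotient/in_setT.
Qed.

Lemma order27_presentation : #|gT| = 27 ->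
  exists2 prm, prm \in presentations & exists F : nat -> gT, table_rep 27 (pres_table prm) F.
Proof.
move=> cardG.
have [z [oz zC commZ cubeZ]] := order_p3_central_element (isT : prime 3) cardG.
have z3 : z ^+ 3 = 1 by rewrite -oz expg_order.
have Zexp h : h \in <[z]> -> exists2 k, k < 3 & h = z ^+ k.
  by case/cyclePmin=> k; rewrite oz; exists k.
case: (boolP [exists g, g ^+ 3 \notin <[z]>]) => [/existsP[x Z'y]|/existsPn cubesZ].
  pose y := x ^+ 3.
  have [r lt_r y3] : exists2 r, r < 3 & y ^+ 3 = z ^+ r.
    by apply: Zexp; rewrite -expgM; apply: cubeZ.
  have yx : y * x = x * y * z ^+ 0 by rewrite mulg1; apply/commute_sym/commuteX.
  have x3 : x ^+ 3 = y ^+ 1 * z ^+ 0 by rewrite expg1 mulg1.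
  have K'x : x \notin [set pres_elt x y z i | i : 'I_9].
    apply/imsetP=> -[i _ xi]; move: Z'y; rewrite /y xi /pres_elt divn_small // mul1g.
    rewrite expgMn; last exact/commute_sym/commute_zX.
    by rewrite -expgM mulnC expgM y3 -!expgM groupM ?groupX ?cycle_id.
  exists (r, 1%N, 0%N, 0%N); first by rewrite mem_cat map_f ?mem_iota.
  by exists (pres_elt x y z); apply: pres_table_rep zC z3 y3 yx x3 oz cardG Z'y K'x.
have {}cubesZ g : g ^+ 3 \in <[z]> by apply: negbNE.
have [y _ Z'y] : exists2 y, y \in [set: gT] & y \notin <[z]>.
  by apply/subsetPn/negP => /subset_leq_card; rewrite cardsT cardG [#|_|]oz.
have [x _ K'x] : exists2 x, x \in [set: gT] & x \notin [set pres_elt 1 y z i | i : 'I_9].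
  apply/subsetPn/negP => /subset_leq_card; rewrite cardsT cardG => le27.
  by have := leq_trans le27 (leq_imset_card _ _); rewrite card_ord.
have [r lt_r y3] := Zexp _ (cubesZ y).
have [v lt_v x3] := Zexp _ (cubesZ x).
have [w lt_w yxw] := Zexp _ (commZ y x).
have yx : y * x = x * y * z ^+ w by rewrite -yxw commgC.
have {}x3 : x ^+ 3 = y ^+ 0 * z ^+ v by rewrite mul1g.
exists (r, 0%N, v, w).
  rewrite mem_cat; apply/orP; right; apply/allpairsP; exists (r, (v, w)).
  by rewrite !mem_iota allpairs_f ?mem_iota.
exists (pres_elt x y z); apply: pres_table_rep zC z3 y3 yx x3 oz cardG Z'y _.
by rewrite (eq_imset _ (fun i : 'I_9 => pres_elt_small x 1 y z (ltn_ord i))).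
Qed.

End Order27.

Definition table_iso_cert n (R T : nat -> nat -> nat) (s : seq nat) : bool :=
  [&& perm_eq s (iota 0 n), nth 0 s 0 == 0 &
   all (fun i => all (fun j => nth 0 s (R i j) == T (nth 0 s i) (nth 0 s j))
     (iota 0 n)) (iota 0 n)].

Lemma table_rep_cert (gT : finGroupType) n R T s (F : nat -> gT) :
  (forall i j, i < n -> j < n -> R i j < n) -> table_iso_cert n R T s ->
  table_rep n T F -> table_rep n R (fun i => F (nth 0 s i)).
Proof.
move=> R_lt /and3P[perm_s /eqP s0 sRT] [TM Fsurj Finj F0].
have size_s : size s = n by rewrite (perm_size perm_s) size_iota.
have mem_s k : (k \in s) = (k < n) by rewrite (perm_mem perm_s) mem_iota.
have s_lt i : i < n -> nth 0 s i < n by move=> lt_in; rewrite -mem_s mem_nth ?size_s.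
split=> [i j lt_in lt_jn|g|i j lt_in lt_jn /Finj|]; last by rewrite s0.
- split; first exact: R_lt.
  move/allP: sRT => /(_ i); rewrite mem_iota => /(_ lt_in) /allP /(_ j).
  by rewrite mem_iota => /(_ lt_jn) /eqP ->; have [] := TM _ _ (s_lt i lt_in) (s_lt j lt_jn).
- have [k lt_kn <-] := Fsurj g; exists (index k s); last by rewrite nth_index ?mem_s.
  by rewrite -size_s index_mem mem_s.
- move=> /(_ (s_lt i lt_in) (s_lt j lt_jn)) /eqP.
  by rewrite nth_uniq ?size_s ?(perm_uniq perm_s) ?iota_uniq // => /eqP.
Qed.

(* Z_9 x Z_3, Z_27, Z_3^3 and the extraspecial groups of exponent 3 and 9. *)
Definition pres_reps : seq pres_param :=
  [:: (0,1,0,0); (1,1,0,0); (0,0,0,0); (0,0,0,1); (0,0,1,1)].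

(* An entry (prm, rep, s) certifies that i |-> s_i maps the table of rep
   isomorphically onto the table of prm. *)
Definition iso_certs : seq (pres_param * pres_param * seq nat) := [::
  ((0,1,0,0), (0,1,0,0), iota 0 27);
  ((1,1,0,0), (1,1,0,0), iota 0 27);
  ((2,1,0,0), (1,1,0,0), [:: 0; 2; 1; 3; 5; 4; 6; 8; 7; 9; 11; 10; 12; 14; 13; 15; 17; 16; 18; 20; 19; 21; 23; 22; 24; 26; 25]);
  ((0,0,0,0), (0,0,0,0), iota 0 27);
  ((0,0,0,1), (0,0,0,1), iota 0 27);
  ((0,0,0,2), (0,0,0,1), [:: 0; 1; 2; 9; 10; 11; 18; 19; 20; 3; 4; 5; 14; 12; 13; 22; 23; 21; 6; 7; 8; 16; 17; 15; 26; 24; 25]);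
  ((0,0,1,0), (0,1,0,0), [:: 0; 3; 6; 1; 4; 7; 2; 5; 8; 9; 12; 15; 10; 13; 16; 11; 14; 17; 18; 21; 24; 19; 22; 25; 20; 23; 26]);
  ((0,0,1,1), (0,0,1,1), iota 0 27);
  ((0,0,1,2), (0,0,1,1), [:: 0; 1; 2; 6; 7; 8; 3; 4; 5; 9; 10; 11; 15; 16; 17; 12; 13; 14; 18; 19; 20; 24; 25; 26; 21; 22; 23]);
  ((0,0,2,0), (0,1,0,0), [:: 0; 3; 6; 2; 5; 8; 1; 4; 7; 9; 12; 15; 11; 14; 17; 10; 13; 16; 18; 21; 24; 20; 23; 26; 19; 22; 25]);
  ((0,0,2,1), (0,0,1,1), [:: 0; 2; 1; 6; 8; 7; 3; 5; 4; 9; 11; 10; 15; 17; 16; 12; 14; 13; 18; 20; 19; 24; 26; 25; 21; 23; 22]);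
  ((0,0,2,2), (0,0,1,1), [:: 0; 2; 1; 3; 5; 4; 6; 8; 7; 9; 11; 10; 12; 14; 13; 15; 17; 16; 18; 20; 19; 21; 23; 22; 24; 26; 25]);
  ((1,0,0,0), (0,1,0,0), [:: 0; 9; 18; 1; 10; 19; 2; 11; 20; 3; 12; 21; 4; 13; 22; 5; 14; 23; 6; 15; 24; 7; 16; 25; 8; 17; 26]);
  ((1,0,0,1), (0,0,1,1), [:: 0; 1; 2; 18; 19; 20; 9; 10; 11; 3; 4; 5; 23; 21; 22; 13; 14; 12; 6; 7; 8; 25; 26; 24; 17; 15; 16]);
  ((1,0,0,2), (0,0,1,1), [:: 0; 1; 2; 9; 10; 11; 18; 19; 20; 3; 4; 5; 14; 12; 13; 22; 23; 21; 6; 7; 8; 16; 17; 15; 26; 24; 25]);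
  ((1,0,1,0), (0,1,0,0), [:: 0; 15; 22; 1; 16; 23; 2; 17; 21; 3; 10; 25; 4; 11; 26; 5; 9; 24; 6; 13; 20; 7; 14; 18; 8; 12; 19]);
  ((1,0,1,1), (0,0,1,1), [:: 0; 1; 2; 21; 22; 23; 15; 16; 17; 3; 4; 5; 26; 24; 25; 11; 9; 10; 6; 7; 8; 20; 18; 19; 12; 13; 14]);
  ((1,0,1,2), (0,0,1,1), [:: 0; 1; 2; 15; 16; 17; 23; 21; 22; 3; 4; 5; 9; 10; 11; 24; 25; 26; 6; 7; 8; 14; 12; 13; 20; 18; 19]);
  ((1,0,2,0), (0,1,0,0), [:: 0; 12; 24; 1; 13; 25; 2; 14; 26; 3; 15; 19; 4; 16; 20; 5; 17; 18; 6; 10; 22; 7; 11; 23; 8; 9; 21]);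
  ((1,0,2,1), (0,0,1,1), [:: 0; 1; 2; 24; 25; 26; 13; 14; 12; 3; 4; 5; 18; 19; 20; 17; 15; 16; 6; 7; 8; 23; 21; 22; 10; 11; 9]);
  ((1,0,2,2), (0,0,1,1), [:: 0; 1; 2; 12; 13; 14; 26; 24; 25; 3; 4; 5; 17; 15; 16; 19; 20; 18; 6; 7; 8; 11; 9; 10; 23; 21; 22]);
  ((2,0,0,0), (0,1,0,0), [:: 0; 9; 18; 2; 11; 20; 1; 10; 19; 3; 12; 21; 5; 14; 23; 4; 13; 22; 6; 15; 24; 8; 17; 26; 7; 16; 25]);
  ((2,0,0,1), (0,0,1,1), [:: 0; 2; 1; 9; 11; 10; 18; 20; 19; 3; 5; 4; 13; 12; 14; 23; 22; 21; 6; 8; 7; 17; 16; 15; 25; 24; 26]);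
  ((2,0,0,2), (0,0,1,1), [:: 0; 2; 1; 18; 20; 19; 9; 11; 10; 3; 5; 4; 22; 21; 23; 14; 13; 12; 6; 8; 7; 26; 25; 24; 16; 15; 17]);
  ((2,0,1,0), (0,1,0,0), [:: 0; 12; 24; 2; 14; 26; 1; 13; 25; 3; 15; 20; 5; 17; 19; 4; 16; 18; 6; 11; 23; 8; 10; 22; 7; 9; 21]);
  ((2,0,1,1), (0,0,1,1), [:: 0; 2; 1; 12; 14; 13; 25; 24; 26; 3; 5; 4; 16; 15; 17; 20; 19; 18; 6; 8; 7; 10; 9; 11; 22; 21; 23]);
  ((2,0,1,2), (0,0,1,1), [:: 0; 2; 1; 24; 26; 25; 14; 13; 12; 3; 5; 4; 18; 20; 19; 16; 15; 17; 6; 8; 7; 22; 21; 23; 11; 10; 9]);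
  ((2,0,2,0), (0,1,0,0), [:: 0; 15; 23; 2; 17; 22; 1; 16; 21; 3; 11; 26; 5; 10; 25; 4; 9; 24; 6; 14; 19; 8; 13; 18; 7; 12; 20]);
  ((2,0,2,1), (0,0,1,1), [:: 0; 2; 1; 15; 17; 16; 22; 21; 23; 3; 5; 4; 9; 11; 10; 24; 26; 25; 6; 8; 7; 13; 12; 14; 19; 18; 20]);
  ((2,0,2,2), (0,0,1,1), [:: 0; 2; 1; 21; 23; 22; 15; 17; 16; 3; 5; 4; 25; 24; 26; 10; 9; 11; 6; 8; 7; 19; 18; 20; 12; 14; 13])].

Lemma iso_certs_cover : all (fun prm => has (fun c =>
    [&& c.1.1 == prm, c.1.2 \in pres_reps &
        table_iso_cert 27 (pres_table c.1.2) (pres_table prm) c.2]) iso_certs)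
  presentations.
Proof. by vm_compute. Qed.

Lemma pres_reps_cover : all (fun prm =>
  covers 27 10 [::] (map (table_candidate 27 (pres_table prm)) (iota 1 26))) pres_reps.
Proof. by vm_compute. Qed.

Theorem lemma2p6 (gT : finGroupType) : #|gT| = 27 -> is_cr gT 10.
Proof.
move=> cardG; split=> [|t crt]; last first.
  rewrite leqNgt; apply/negP => lt_t10.
  exact: (pgroup_not_cr_threshold (p := 3) (n := 2)) cardG (cr_thresholdW crt _).
have [prm prmP [F repF]] := order27_presentation cardG.
have /hasP[[[prm' rep] s] _ /and3P[/eqP/= eq_prm repP certP]] := allP iso_certs_cover prm prmP.
subst prm'; rewrite /= in certP repP.
have rep_lt i j (_ : i < 27) (_ : j < 27) := pres_table_lt rep i j.
apply: (table_cr_threshold (table_rep_cert rep_lt certP repF)).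
exact: (allP pres_reps_cover _ repP).
Qed.
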